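(* For every $n\ge4$, the function $f_n(x_1,\ldots,x_n)=x_1x_2\vee x_1x_3\vee\cdots\vee x_1x_{n-1}\vee x_2x_3\cdots x_n$ is a positive threshold function depending on all its variables, it is not linear read-once, and its specification number in $\mathcal{H}_n$ is $\sigma_{\mathcal{H}_n}(f_n)=n+1$.
   Context: $f$ on $\{0,1\}^n$ is positive if $f(\mathbf{x})=1$ and $\mathbf{x}\le\mathbf{y}$ coordinatewise imply $f(\mathbf{y})=1$. $f$ is a threshold function if there are $w_1,\ldots,w_n,t\in\mathbb{R}$ with $f(\mathbf{x})=0\iff\sum_iw_ix_i\le t$. $\mathcal{H}_n$ is the class of threshold functions of $n$ variables. A set $S\subseteq\{0,1\}^n$ specifies $f\in\mathcal{H}_n$ if $f$ is the only function in $\mathcal{H}_n$ agreeing with $f$ on $S$; $\sigma_{\mathcal{H}_n}(f)$ is the minimum size of such a set. Linear read-once (lro): constant or representable by a nested formula (literals are nested; $x\vee t$, $x\wedge t$, $\overline{x}\vee t$, $\overline{x}\wedge t$ are nested when $t$ is nested and contains neither $x$ nor $\overline{x}$). *)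

From HB Require Import structures.
From mathcomp Require Import all_boot all_order all_algebra.
Set Implicit Arguments. Unset Strict Implicit. Unset Printing Implicit Defensive.
Import Order.TTheory GRing.Theory Num.Theory.

(* The cube {0,1}^n, coordinates indexed by 'I_n (x_{i+1} is x i). *)
Definition cube (n : nat) := {ffun 'I_n -> bool}.
Definition boolfun (n : nat) := {ffun cube n -> bool}.

Definition positive n (f : boolfun n) : Prop :=
  forall x y : cube n, f x -> (forall i, x i <= y i) -> f y.

Definition threshold (R : realFieldType) n (f : boolfun n) : Prop :=
  exists (w : 'I_n -> R) (t : R),
    forall x : cube n, (f x = false) <-> (\sum_(i < n) w i * (x i)%:R <= t)%R.

Definition flip n (x : cube n) (i : 'I_n) : cube n :=
  [ffun j => if j == i then ~~ x j else x j].

Definition depends_on_all n (f : boolfun n) : Prop :=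
  forall i : 'I_n, exists x : cube n, f x != f (flip x i).

Inductive nested (n : nat) : Type :=
| NLit of 'I_n & bool                (* literal: x_i if true, ~x_i if false *)
| NOr  of 'I_n & bool & nested n
| NAnd of 'I_n & bool & nested n.

Definition lit n (x : cube n) (i : 'I_n) (b : bool) : bool :=
  if b then x i else ~~ x i.

Fixpoint nvars n (phi : nested n) : seq 'I_n :=
  match phi with
  | NLit i _ => [:: i]
  | NOr i _ t => i :: nvars t
  | NAnd i _ t => i :: nvars t
  end.

Fixpoint nwf n (phi : nested n) : bool :=
  match phi with
  | NLit _ _ => true
  | NOr i _ t => (i \notin nvars t) && nwf t
  | NAnd i _ t => (i \notin nvars t) && nwf t
  end.

Fixpoint neval n (phi : nested n) (x : cube n) : bool :=
  match phi with
  | NLit i b => lit x i b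
  | NOr i b t => lit x i b || neval t x
  | NAnd i b t => lit x i b && neval t x
  end.

Definition lro n (f : boolfun n) : Prop :=
  (exists b : bool, forall x, f x = b) \/
  (exists phi : nested n, nwf phi /\ forall x, f x = neval phi x).

Definition specifies (R : realFieldType) n (f : boolfun n) (S : {set cube n}) : Prop :=
  threshold R f /\
  forall g : boolfun n, threshold R g -> {in S, forall x, g x = f x} -> g = f.

Definition spec_number_is (R : realFieldType) n (f : boolfun n) (k : nat) : Prop :=
  (exists S : {set cube n}, specifies R f S /\ #|S| = k) /\
  (forall S : {set cube n}, specifies R f S -> k <= #|S|).

(* f_n = x1x2 \/ ... \/ x1x_{n-1} \/ x2x3...xn  (0-based indices) *)
Definition fn (n : nat) : boolfun n :=
  [ffun x : cube n =>
     [exists i : 'I_n, exists j : 'I_n,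
        [&& val i == 0, 1 <= val j, val j <= n - 2, x i & x j]]
     || [forall j : 'I_n, (0 < val j) ==> x j]].

From HB Require Import structures.
From mathcomp Require Import all_boot all_order all_algebra.
From mathcomp Require Import zify lra.
Set Implicit Arguments. Unset Strict Implicit. Unset Printing Implicit Defensive.
Import Order.TTheory GRing.Theory Num.Theory.

(* Write n = k + 4 and call x_2, ..., x_(n-1) the inner variables.  f_n is the
   threshold function with weights 2k+3 on x_1, 1 on x_n and 2 on the inner
   variables, and threshold 2k+4; nonnegative weights make it positive.  Fixing
   any literal leaves f_n non-constant, so no outermost literal of a nested
   formula can represent it, and f_n is not linear read-once.

   The n+1 points e_1+e_j (j inner), e_1+e_n, the sum of the inner e_j, and
   that sum plus e_n specify f_n: the inequalities these values impose on
   separating weights and threshold imply 0 < w_n < w_j for inner j and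
   w_1 > 0, and then decide every other point.  Conversely, toggling f_n at any
   of these points gives another threshold function, so every specifying set
   contains all of them.  Once an inner index j is fixed, all functions involved
   are symmetric in the other inner variables, hence computed from x_1, x_n,
   x_j and the number of other inner variables set to 1; on such profiles the
   threshold conditions are finitely many linear inequalities over nat. *)

Section ThresholdFunctions.
Variable n : nat.
Implicit Types (f g : boolfun n) (x p : cube n).

Definition nat_threshold f (w : 'I_n -> nat) (t : nat) : Prop :=
  forall x, f x = (t < \sum_(i < n) w i * x i).

Lemma nat_threshold_threshold (R : realFieldType) f w t :
  nat_threshold f w t -> threshold R f.
Proof.
move=> fE; exists (fun i => (w i)%:R%R), t%:R%R => x.
under eq_bigr do rewrite -natrM.
by rewrite -natr_sum ler_nat fE ltnNge; case: (_ <= _).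
Qed.

Lemma nat_threshold_positive f w t : nat_threshold f w t -> positive f.
Proof.
move=> fE x y; rewrite !fE => /leq_trans lt_t le_xy; apply: lt_t.
by apply: leq_sum => i _; rewrite leq_mul.
Qed.

Lemma thresholdE (R : realFieldType) f : threshold R f ->
  exists (w : 'I_n -> R) (t : R),
    forall x, f x = (t < \sum_(i < n) w i * (x i)%:R)%R.
Proof.
case=> w [t fE]; exists w, t => x; rewrite ltNge.
by have := fE x; case: (f x); case: (_ <= t)%R => -[h1 h2] //;
  [have := h2 isT | have := h1 erefl].
Qed.

Definition toggle f p : boolfun n := [ffun x => f x (+) (x == p)].

Lemma specifies_toggle_mem (R : realFieldType) f (S : {set cube n}) p :
  specifies R f S -> threshold R (toggle f p) -> p \in S.
Proof.
move=> [_ uniqS] thr; apply: contraT => pNS.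
have /ffunP/(_ p) : toggle f p = f.
  apply: uniqS thr _ => x xS; rewrite ffunE; case: eqP => [xp|_]; last exact: addbF.
  by move: pNS; rewrite -xp xS.
by rewrite ffunE eqxx addbT; case: (f p).
Qed.

Lemma not_lro_of_faces f : 0 < n ->
  (forall i b, (exists x, x i = b /\ f x) /\ (exists x, x i = b /\ ~~ f x)) ->
  ~ lro f.
Proof.
move=> n_gt0 faces [[b fb] | [phi [_ fphi]]].
  have [[x [_ fx]] [y [_ fy]]] := faces (Ordinal n_gt0) true.
  by move: fy; rewrite fb -(fb x) fx.
(* A literal alone or in a conjunction makes f false where the literal fails;
   in a disjunction it makes f true where it holds. *)
case: phi fphi => [i b | i b t | i b t] /= fphi;
  [ have [[x [xi fx]] _] := faces i (~~ b)
  | have [_ [x [xi fx]]] := faces i b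
  | have [[x [xi fx]] _] := faces i (~~ b) ];
  by move: fx; rewrite fphi /lit xi; clear fphi xi; case: b.
Qed.

End ThresholdFunctions.

Section Fn.
Variable k : nat.
Local Notation n := k.+4.
Implicit Types (x : cube n) (i j : 'I_n).

(* With 0-based indices ord0 is x_1, ord_max is x_n, and inner i is x_(i+1). *)
Definition inner i : bool := 0 < i < n.-1.

Lemma ord_cases i : [|| i == ord0, i == ord_max | inner i].
Proof. by rewrite /inner -!(inj_eq val_inj) /=; have := ltn_ord i; lia. Qed.

Lemma inner_neq0 i : inner i -> i != ord0.
Proof. by rewrite /inner -!(inj_eq val_inj) /=; lia. Qed.

Lemma inner_neq_max i : inner i -> i != ord_max.
Proof. by rewrite /inner -!(inj_eq val_inj) /=; lia. Qed.

Lemma ord0_neq_max : ord0 != ord_max :> 'I_n.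
Proof. by rewrite -(inj_eq val_inj). Qed.

Definition idx1 : 'I_n := Ordinal (isT : 1 < n).
Definition idx2 : 'I_n := Ordinal (isT : 2 < n).

Lemma inner_idx1 : inner idx1. Proof. by []. Qed.
Lemma inner_idx2 : inner idx2. Proof. by []. Qed.

Lemma big_inner (T : Type) (idx : T) (op : Monoid.com_law idx) (F : 'I_n -> T) :
  \big[op/idx]_i F i = op (F ord0) (op (F ord_max) (\big[op/idx]_(i | inner i) F i)).
Proof.
rewrite (bigD1 ord0) //= (bigD1 ord_max) //=; congr (op _ (op _ _)).
by apply: eq_bigl => i; rewrite /inner -!(inj_eq val_inj) /=; have := ltn_ord i; lia.
Qed.

Lemma card_inner : #|inner| = k.+2.
Proof.
have := cardC inner.
have -> : #|[predC inner]| = #|pred2 (ord0 : 'I_n) ord_max|.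
  by apply: eq_card => i; rewrite !inE /inner -!(inj_eq val_inj) /=; have := ltn_ord i; lia.
by rewrite card2 ord0_neq_max card_ord addn2 => /eqP; rewrite !eqSS => /eqP.
Qed.

Lemma card_inner_others j : inner j -> #|[pred i | inner i && (i != j)]| = k.+1.
Proof.
move=> ij; have := cardD1x (A := inner) ij; rewrite card_inner => /eqP.
rewrite add1n eqSS => /eqP card_others; apply: etrans _ (esym card_others).
by apply: eq_card => i; rewrite !inE andbC.
Qed.

Lemma fnE x : fn n x =
  x ord0 && [exists i, inner i && x i] || x ord_max && [forall i, inner i ==> x i].
Proof.
rewrite ffunE; congr orb; apply/idP/idP.
- case/existsP=> i /existsP[j /and5P[/eqP i0 j_gt0 j_le xi xj]].
  have -> : ord0 = i by apply: val_inj.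
  rewrite xi; apply/existsP; exists j; rewrite xj andbT /inner.
  by move: j_gt0 j_le => /=; lia.
- case/andP=> x0 /existsP[j /andP[ij xj]]; apply/existsP; exists ord0.
  by apply/existsP; exists j; rewrite x0 xj /= andbT; move: ij; rewrite /inner /=; lia.
- move=> /forallP all_x; rewrite (implyP (all_x ord_max)) //=.
  by apply/forallP => i; apply/implyP => /andP[i_gt0 _]; exact: (implyP (all_x i)).
case/andP=> xl /forallP inner_x; apply/forallP => i; apply/implyP => i_gt0.
have /or3P[/eqP i0 | /eqP -> // | ii] := ord_cases i; last exact: (implyP (inner_x i)).
by move: i_gt0; rewrite i0.
Qed.

Definition others j x : nat := \sum_(i | inner i && (i != j)) x i.

Lemma others_le j x : inner j -> others j x <= k.+1.
Proof.
move=> ij; rewrite -(card_inner_others ij) -sum1_card.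
by apply: leq_sum => i _; exact: leq_b1.
Qed.

Lemma others_eq0 j x : (others j x == 0) = [forall i, inner i && (i != j) ==> ~~ x i].
Proof. by rewrite sum_nat_eq0; apply: eq_forallb => i; case: (x i); case: (_ && _). Qed.

Lemma others_eq_max j x : inner j ->
  (others j x == k.+1) = [forall i, inner i && (i != j) ==> x i].
Proof.
move=> ij; have split : others j x + \sum_(i | inner i && (i != j)) ~~ x i = k.+1.
  rewrite -[X in _ = X](card_inner_others ij) -sum1_card -big_split.
  by apply: eq_bigr => i _; case: (x i).
rewrite -[X in _ == X]split -{1}[others j x]addn0 eqn_add2l eq_sym sum_nat_eq0.
by apply: eq_forallb => i; case: (x i); case: (_ && _).
Qed.

Lemma exists_inner j x : inner j -> [exists i, inner i && x i] = x j || (0 < others j x).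
Proof.
move=> ij; rewrite lt0n others_eq0; apply/existsP/orP => [[i /andP[ii xi]] | ].
  have [<- | i_neq_j] := eqVneq i j; [by left | right].
  by apply/forallPn; exists i; rewrite ii i_neq_j xi.
case=> [xj | /forallPn[i]]; first by exists j; rewrite ij xj.
by rewrite negb_imply negbK => /andP[/andP[ii _] xi]; exists i; rewrite ii xi.
Qed.

Lemma forall_inner j x : inner j ->
  [forall i, inner i ==> x i] = x j && (others j x == k.+1).
Proof.
move=> ij; rewrite others_eq_max //; apply/forallP/andP => [all_x | [xj /forallP others_x] i].
  split; first exact: (implyP (all_x j)).
  by apply/forallP => i; apply/implyP => /andP[ii _]; exact: (implyP (all_x i)).
apply/implyP => ii; have [-> // | i_neq_j] := eqVneq i j.
by apply: (implyP (others_x i)); rewrite ii i_neq_j.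
Qed.

Definition fn_profile (b0 bl bj : bool) (m : nat) : bool :=
  b0 && (bj || (0 < m)) || bl && bj && (m == k.+1).

Lemma fn_by_profile j x : inner j ->
  fn n x = fn_profile (x ord0) (x ord_max) (x j) (others j x).
Proof. by move=> ij; rewrite fnE (exists_inner x ij) (forall_inner x ij) andbA. Qed.

Definition block_fun (T : Type) j (u0 ul uj uo : T) i : T :=
  if i == ord0 then u0 else if i == ord_max then ul else if i == j then uj else uo.

Section BlockFun.
Variables (T : Type) (j : 'I_n) (u0 ul uj uo : T).

Lemma block_fun0 : block_fun j u0 ul uj uo ord0 = u0.
Proof. by rewrite /block_fun eqxx. Qed.

Lemma block_fun_max : block_fun j u0 ul uj uo ord_max = ul.
Proof. by rewrite /block_fun eq_sym (negPf ord0_neq_max) eqxx. Qed.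

Lemma block_fun_j : inner j -> block_fun j u0 ul uj uo j = uj.
Proof.
by move=> ij; rewrite /block_fun (negPf (inner_neq0 ij)) (negPf (inner_neq_max ij)) eqxx.
Qed.

Lemma block_fun_other i : inner i -> i != j -> block_fun j u0 ul uj uo i = uo.
Proof.
move=> ii i_neq_j; rewrite /block_fun (negPf i_neq_j).
by rewrite (negPf (inner_neq0 ii)) (negPf (inner_neq_max ii)).
Qed.

End BlockFun.

Lemma sum_block_fun j x (a b d c : nat) : inner j ->
  \sum_(i < n) block_fun j a b d c i * x i =
  a * x ord0 + b * x ord_max + d * x j + c * others j x.
Proof.
move=> ij; rewrite big_inner (bigD1 j) //= block_fun0 block_fun_max block_fun_j //.
rewrite /others big_distrr !addnA; congr (_ + _).
by apply: eq_bigr => i /andP[ii i_neq_j]; rewrite block_fun_other.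
Qed.

Lemma profile_threshold (R : realFieldType) (g : boolfun n) j
    (G : bool -> bool -> bool -> nat -> bool) (a b d c t : nat) :
  inner j -> (forall x, g x = G (x ord0) (x ord_max) (x j) (others j x)) ->
  (forall b0 bl bj m, m <= k.+1 -> G b0 bl bj m = (t < a * b0 + b * bl + d * bj + c * m)) ->
  threshold R g.
Proof.
move=> ij gE GE; apply: (@nat_threshold_threshold _ R _ (block_fun j a b d c) t) => x.
by rewrite gE sum_block_fun // GE // others_le.
Qed.

Lemma fn_nat_threshold : nat_threshold (fn n) (block_fun idx1 (2 * k + 3) 1 2 2) (2 * k + 4).
Proof.
move=> x; rewrite (fn_by_profile x inner_idx1) sum_block_fun //.
have := others_le x inner_idx1; rewrite /fn_profile.
by case: (x ord0); case: (x ord_max); case: (x idx1) => /=; lia.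
Qed.

Definition pt j (b0 bl bj bo : bool) : cube n := [ffun i => block_fun j b0 bl bj bo i].

Lemma pt0 j b0 bl bj bo : pt j b0 bl bj bo ord0 = b0.
Proof. by rewrite ffunE block_fun0. Qed.

Lemma pt_max j b0 bl bj bo : pt j b0 bl bj bo ord_max = bl.
Proof. by rewrite ffunE block_fun_max. Qed.

Lemma pt_j j b0 bl bj bo : inner j -> pt j b0 bl bj bo j = bj.
Proof. by move=> ij; rewrite ffunE block_fun_j. Qed.

Lemma pt_other j b0 bl bj bo i : inner i -> i != j -> pt j b0 bl bj bo i = bo.
Proof. by move=> ii i_neq_j; rewrite ffunE block_fun_other. Qed.

Lemma pt_inner j b0 bl b i : inner i -> pt j b0 bl b b i = b.
Proof. by move=> ii; have [<- | ] := eqVneq i j; [exact: pt_j | exact: pt_other]. Qed.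

Lemma others_pt j b0 bl bj bo : inner j ->
  others j (pt j b0 bl bj bo) = if bo then k.+1 else 0.
Proof.
move=> ij; rewrite /others; under eq_bigr => i /andP[ii i_neq_j] do rewrite pt_other //.
by case: bo; [rewrite -[X in _ = X](card_inner_others ij) -sum1_card | rewrite big1].
Qed.

Lemma fn_pt j b0 bl bj bo : inner j ->
  fn n (pt j b0 bl bj bo) = fn_profile b0 bl bj (if bo then k.+1 else 0).
Proof. by move=> ij; rewrite (fn_by_profile _ ij) pt0 pt_max pt_j // others_pt. Qed.

Definition pt_profile (b0 bl bj bo c0 cl cj : bool) (m : nat) : bool :=
  [&& c0 == b0, cl == bl, cj == bj & m == if bo then k.+1 else 0].

Lemma eq_ptE j b0 bl bj bo x : inner j ->
  (x == pt j b0 bl bj bo) = pt_profile b0 bl bj bo (x ord0) (x ord_max) (x j) (others j x).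
Proof.
move=> ij; apply/eqP/and4P => [-> | [/eqP x0 /eqP xl /eqP xj others_x]].
  by rewrite pt0 pt_max pt_j // others_pt.
apply/ffunP => i; rewrite ffunE.
have /or3P[/eqP -> | /eqP -> | ii] := ord_cases i; rewrite ?block_fun0 ?block_fun_max //.
have [-> | i_neq_j] := eqVneq i j; first by rewrite block_fun_j.
rewrite block_fun_other //; case: bo others_x.
  by rewrite others_eq_max // => /forallP/(_ i); rewrite ii i_neq_j => /implyP->.
by rewrite others_eq0 => /forallP/(_ i); rewrite ii i_neq_j => /implyP/(_ isT)/negPf.
Qed.

Lemma flip_pt0 j b0 bl bj bo : flip (pt j b0 bl bj bo) ord0 = pt j (~~ b0) bl bj bo.
Proof. by apply/ffunP => i; rewrite !ffunE /block_fun; case: (i == ord0). Qed.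

Lemma flip_pt_max j b0 bl bj bo : flip (pt j b0 bl bj bo) ord_max = pt j b0 (~~ bl) bj bo.
Proof.
apply/ffunP => i; rewrite !ffunE /block_fun.
by have [-> | //] := eqVneq i ord_max; rewrite eq_sym (negPf ord0_neq_max).
Qed.

Lemma flip_pt_j j b0 bl bj bo : inner j -> flip (pt j b0 bl bj bo) j = pt j b0 bl (~~ bj) bo.
Proof.
move=> ij; apply/ffunP => i; rewrite !ffunE /block_fun.
by have [-> | //] := eqVneq i j; rewrite (negPf (inner_neq0 ij)) (negPf (inner_neq_max ij)).
Qed.

Lemma fn_positive : positive (fn n).
Proof. exact: nat_threshold_positive fn_nat_threshold. Qed.

Lemma fn_threshold (R : realFieldType) : threshold R (fn n).
Proof. exact: nat_threshold_threshold fn_nat_threshold. Qed.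

Lemma fn_depends_on_all : depends_on_all (fn n).
Proof.
move=> i; have /or3P[/eqP -> | /eqP -> | ii] := ord_cases i.
- by exists (pt idx1 true false true false); rewrite flip_pt0 !fn_pt.
- by exists (pt idx1 false true true true); rewrite flip_pt_max !fn_pt //= /fn_profile eqxx.
- by exists (pt i true false true false); rewrite flip_pt_j // !fn_pt.
Qed.

Lemma fn_faces i b :
  (exists x, x i = b /\ fn n x) /\ (exists x, x i = b /\ ~~ fn n x).
Proof.
have /or3P[/eqP -> | /eqP -> | ii] := ord_cases i.
- split; [exists (pt idx1 b (~~ b) true (~~ b)) | exists (pt idx1 b false false false)];
    by rewrite pt0 fn_pt //= /fn_profile; case: b; rewrite ?eqxx ?andbF.
- split; [exists (pt idx1 (~~ b) b true b) | exists (pt idx1 false b false false)];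
    by rewrite pt_max fn_pt //= /fn_profile; case: b; rewrite ?eqxx ?andbF.
- split; [exists (pt i true false b (~~ b)) | exists (pt i false false b false)];
    by rewrite pt_j // fn_pt //= /fn_profile; case: b.
Qed.

Lemma fn_not_lro : ~ lro (fn n).
Proof. exact: not_lro_of_faces fn_faces. Qed.

Definition spec_set : {set cube n} :=
  pt idx1 false false true true |: (pt idx1 true true false false |:
  (pt idx1 false true true true |: [set pt j true false true false | j in inner])).

Lemma card_spec_set : #|spec_set| = n.+1.
Proof.
have card_im : #|[set pt j true false true false | j in inner]| = k.+2.
  rewrite card_in_imset ?card_inner //.
  move=> i i' ii ii' /ffunP/(_ i); rewrite pt_j //.
  by have [// | i_neq_i'] := eqVneq i i'; rewrite pt_other.
have notin_im b0 bl bj bo : b0 != true \/ bl != false ->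
    pt idx1 b0 bl bj bo \notin [set pt j true false true false | j in inner].
  move=> neq; apply/imsetP => -[j _ /ffunP pt_eq].
  move: neq (pt_eq ord0) (pt_eq ord_max); rewrite !pt0 !pt_max.
  by case=> /eqP ne; [move/ne | move=> _ /ne].
have pt_neq b0 bl bj bo c0 cl cj co : (b0 != c0) || (bl != cl) ->
    pt idx1 b0 bl bj bo != pt idx1 c0 cl cj co.
  move=> neq; apply: contraTneq neq => /ffunP pt_eq.
  by move: (pt_eq ord0) (pt_eq ord_max); rewrite !pt0 !pt_max => -> ->; rewrite !eqxx.
rewrite /spec_set !cardsU1 card_im !in_setU1 !negb_or !pt_neq ?notin_im //; by [left | right].
Qed.

Section InnerWeight.
Local Open Scope ring_scope.
Variables (R : realFieldType) (w : 'I_n -> R).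

Definition inner_weight x : R := \sum_(i | inner i) w i * (x i)%:R.
Definition inner_total : R := \sum_(i | inner i) w i.

Lemma weight_split x : \sum_(i < n) w i * (x i)%:R =
  w ord0 * (x ord0)%:R + (w ord_max * (x ord_max)%:R + inner_weight x).
Proof. exact: (big_inner _ (fun i => w i * (x i)%:R)). Qed.

Lemma inner_weight_all x : (forall i, inner i -> x i) -> inner_weight x = inner_total.
Proof. by move=> all_x; apply: eq_bigr => i ii; rewrite all_x // mulr1. Qed.

Lemma inner_weight_none x : (forall i, inner i -> ~~ x i) -> inner_weight x = 0.
Proof. by move=> no_x; apply: big1 => i ii; rewrite (negPf (no_x i ii)) mulr0. Qed.

Lemma inner_weight_pt j : inner j -> inner_weight (pt j true false true false) = w j.
Proof.
move=> ij; rewrite /inner_weight (bigD1 j) //= pt_j // mulr1 big1 ?addr0 //.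
by move=> i /andP[ii i_neq_j]; rewrite pt_other // mulr0.
Qed.

Hypothesis w_inner_ge0 : forall i, inner i -> 0 <= w i.

Lemma inner_weight_le x : inner_weight x <= inner_total.
Proof. by apply: ler_sum => i ii; case: (x i); rewrite ?mulr1 ?mulr0 ?w_inner_ge0. Qed.

Lemma inner_weight_ge i x : inner i -> x i -> w i <= inner_weight x.
Proof.
move=> ii xi; rewrite /inner_weight (bigD1 i) //= xi mulr1 lerDl.
by apply: sumr_ge0 => l /andP[il _]; rewrite mulr_ge0 ?w_inner_ge0.
Qed.

Lemma inner_weight_le_drop i x : inner i -> ~~ x i -> inner_weight x <= inner_total - w i.
Proof.
move=> ii xi; rewrite /inner_weight /inner_total (bigD1 i) //= (negPf xi) mulr0 add0r.
rewrite [X in _ <= X - _](bigD1 i) //= addrC addrK; apply: ler_sum => l /andP[il _].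
by case: (x l); rewrite ?mulr1 ?mulr0 ?w_inner_ge0.
Qed.

End InnerWeight.

Definition fn_weight_bounds (R : realFieldType) (w : 'I_n -> R) (t : R) : Prop :=
  [/\ forall j, inner j -> t < w ord0 + w j, w ord0 + w ord_max <= t,
      inner_total w <= t & t < w ord_max + inner_total w]%R.

Lemma spec_set_weight_bounds (R : realFieldType) (g : boolfun n) (w : 'I_n -> R) t :
  (forall x, g x = (t < \sum_(i < n) w i * (x i)%:R)%R) ->
  {in spec_set, forall x, g x = fn n x} -> fn_weight_bounds w t.
Proof.
move=> gE agree.
have fn_on_S x : x \in spec_set -> fn n x = (t < \sum_(i < n) w i * (x i)%:R)%R.
  by move=> xS; rewrite -gE agree.
have in_S1 : pt idx1 false false true true \in spec_set by rewrite !in_setU1 eqxx.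
have in_S2 : pt idx1 true true false false \in spec_set by rewrite !in_setU1 eqxx orbT.
have in_S3 : pt idx1 false true true true \in spec_set by rewrite !in_setU1 eqxx !orbT.
have in_S j : inner j -> pt j true false true false \in spec_set.
  by move=> ij; rewrite !in_setU1; apply/or4P/Or44/imsetP; exists j.
split.
- move=> j ij; move: (fn_on_S _ (in_S j ij)).
  by rewrite fn_pt // weight_split pt0 pt_max inner_weight_pt // mulr1 mulr0 add0r => /esym.
- move: (fn_on_S _ in_S2); rewrite fn_pt // weight_split pt0 pt_max inner_weight_none.
    by rewrite !mulr1 addr0 /fn_profile /= => /esym/negbT; rewrite -leNgt.
  by move=> i ii; rewrite pt_inner.
- move: (fn_on_S _ in_S1); rewrite fn_pt // weight_split pt0 pt_max inner_weight_all.
    by rewrite !mulr0 !add0r /fn_profile /= => /esym/negbT; rewrite -leNgt.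
  by move=> i ii; rewrite pt_inner.
- move: (fn_on_S _ in_S3); rewrite fn_pt // weight_split pt0 pt_max inner_weight_all.
    by rewrite mulr0 mulr1 add0r /fn_profile /= eqxx => /esym.
  by move=> i ii; rewrite pt_inner.
Qed.

Section WeightBounds.
Local Open Scope ring_scope.
Variables (R : realFieldType) (w : 'I_n -> R) (t : R).
Hypothesis bounds : fn_weight_bounds w t.

Lemma weight_bounds_signs :
  [/\ 0 < w ord0, 0 < w ord_max & forall i, inner i -> w ord_max < w i].
Proof.
case: bounds => pair_gt last_pair_le total_le total_lt.
have wl_lt i : inner i -> w ord_max < w i by move=> ii; have := pair_gt i ii; lra.
have w_inner_ge0 i : inner i -> 0 <= w i by move=> ii; have := wl_lt i ii; lra.
split=> //; last by lra.
pose x := pt idx2 false false false true.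
have x1 : x idx1 by rewrite pt_other.
have x2 : ~~ x idx2 by rewrite pt_j.
have := inner_weight_ge w_inner_ge0 inner_idx1 x1.
have := inner_weight_le_drop w_inner_ge0 inner_idx2 x2.
have := pair_gt _ inner_idx1; have := wl_lt _ inner_idx2; lra.
Qed.

Lemma fn_of_weight_bounds x : fn n x = (t < \sum_(i < n) w i * (x i)%:R).
Proof.
case: bounds => pair_gt last_pair_le total_le total_lt.
have [w0_gt0 wl_gt0 wl_lt] := weight_bounds_signs.
have w_inner_ge0 i : inner i -> 0 <= w i by move=> ii; have := wl_lt i ii; lra.
have x0_ge0 : 0 <= w ord0 * (x ord0)%:R by rewrite mulr_ge0 ?ler0n ?ltW.
have xl_ge0 : 0 <= w ord_max * (x ord_max)%:R by rewrite mulr_ge0 ?ler0n ?ltW.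
rewrite fnE weight_split.
have [/andP[x0 /existsP[i /andP[ii xi]]] | no_pair] /= := boolP (x ord0 && _).
  have := inner_weight_ge w_inner_ge0 ii xi; have := pair_gt i ii.
  by rewrite x0 mulr1; symmetry; lra.
have [/andP[xl /forallP all_x] | no_all] /= := boolP (x ord_max && _).
  rewrite xl mulr1 inner_weight_all => [|i ii]; last exact: (implyP (all_x i)).
  by symmetry; lra.
symmetry; apply/negbTE; rewrite -leNgt.
have [x0 | x0] := boolP (x ord0).
  rewrite mulr1 inner_weight_none => [|i ii]; last first.
    by apply: contra no_pair => xi; rewrite x0; apply/existsP; exists i; rewrite ii.
  by case: (x ord_max); rewrite ?mulr1 ?mulr0; lra.
rewrite mulr0 add0r.
have [xl | xl] := boolP (x ord_max).
  have /forallPn[i] : ~~ [forall i, inner i ==> x i] by rewrite xl in no_all.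
  rewrite negb_imply => /andP[ii xi].
  have := inner_weight_le_drop w_inner_ge0 ii xi; have := wl_lt i ii.
  by rewrite mulr1; lra.
by rewrite mulr0 add0r; have := inner_weight_le w_inner_ge0 x; lra.
Qed.
End WeightBounds.

Lemma spec_set_specifies (R : realFieldType) : specifies R (fn n) spec_set.
Proof.
split=> [|g /thresholdE[w [t gE]] agree]; first exact: fn_threshold.
have bounds := spec_set_weight_bounds gE agree.
by apply/ffunP => x; rewrite gE (fn_of_weight_bounds bounds).
Qed.

Lemma toggle_fn_pt_threshold (R : realFieldType) j b0 bl bj bo (a b d c t : nat) :
  inner j ->
  (forall c0 cl cj m, m <= k.+1 ->
     fn_profile c0 cl cj m (+) pt_profile b0 bl bj bo c0 cl cj m =
     (t < a * c0 + b * cl + d * cj + c * m)) ->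
  threshold R (toggle (fn n) (pt j b0 bl bj bo)).
Proof.
move=> ij GE; apply: (profile_threshold R ij _ GE) => x.
by rewrite ffunE (fn_by_profile _ ij) eq_ptE.
Qed.

Lemma spec_set_subset (R : realFieldType) (S : {set cube n}) :
  specifies R (fn n) S -> spec_set \subset S.
Proof.
move=> specS; apply/subsetP => x.
rewrite !in_setU1 => /or4P[/eqP-> | /eqP-> | /eqP-> | /imsetP[j ij ->]];
  apply: specifies_toggle_mem specS _;
  [ apply: (toggle_fn_pt_threshold (a := 2 * k + 2) (b := 1) (d := 2) (c := 2)
                                   (t := 2 * k + 3) _ inner_idx1)
  | apply: (toggle_fn_pt_threshold (a := 2 * k + 3) (b := 2) (d := 2) (c := 2)
                                   (t := 2 * k + 4) _ inner_idx1)
  | apply: (toggle_fn_pt_threshold (a := k + 2) (b := 0) (d := 1) (c := 1)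
                                   (t := k + 2) _ inner_idx1)
  | apply: (toggle_fn_pt_threshold (a := 4 * k + 5) (b := 2) (d := 3) (c := 4)
                                   (t := 4 * k + 8) _ ij) ];
  move=> c0 cl cj m; rewrite /fn_profile /pt_profile;
  by case: c0; case: cl; case: cj => /=; lia.
Qed.

Lemma fn_spec_number (R : realFieldType) : spec_number_is R (fn n) n.+1.
Proof.
split; first by exists spec_set; split; [exact: spec_set_specifies | exact: card_spec_set].
by move=> S specS; rewrite -card_spec_set subset_leq_card // (spec_set_subset specS).
Qed.

End Fn.

Theorem mainTheorem18 (R : realFieldType) (n : nat) : 4 <= n ->
  positive (fn n) /\ threshold R (fn n) /\ depends_on_all (fn n) /\
  ~ lro (fn n) /\ spec_number_is R (fn n) n.+1.
Proof.
move=> n_ge4; have [k ->] : exists k, n = k.+4 by exists (n - 4); lia.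
split; first exact: fn_positive.
split; first exact: fn_threshold.
split; first exact: fn_depends_on_all.
split; first exact: fn_not_lro.
exact: fn_spec_number.
Qed.
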